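(* For every integer $n$ with $1\le n\le N$ and every $\delta\in(0,1]$, with probability at least $1-\delta$, \[ \frac{\sum_{t=1}^n (X_t-\mu)}{n}\le (b-a)\sqrt{\frac{\rho_n\log(1/\delta)}{2n}}. \]
   Context: Let $N\ge 2$ and let $\mathcal X=(x_1,\dots,x_N)$ be a finite population of real numbers (repetitions allowed). Let $(X_1,\dots,X_N)=(x_{\pi(1)},\dots,x_{\pi(N)})$, where $\pi$ is a uniformly random permutation of $\{1,\dots,N\}$. For $n\le N$, $(X_1,\dots,X_n)$ is therefore a sample of size $n$ drawn uniformly without replacement from $\mathcal X$. Let $\mu=\frac1N\sum_{i=1}^N x_i$, $a=\min_i x_i$ and $b=\max_i x_i$. Define \[ \rho_n=\begin{cases}1-\frac{n-1}{N} & \text{if } n\le N/2,\\[2pt] \big(1-\frac nN\big)(1+1/n) & \text{if } n>N/2.\end{cases} \] *)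

From mathcomp Require Import all_boot all_fingroup.
From Stdlib Require Import Reals.
Set Implicit Arguments. Unset Strict Implicit. Unset Printing Implicit Defensive.

(* Population x_1..x_N is represented by x 0, ..., x (N-1). *)
Definition pop_mean (N : nat) (x : nat -> R) : R :=
  Rdiv (\big[Rplus/0%R]_(i < N) x (nat_of_ord i)) (INR N).
Definition pop_min (N : nat) (x : nat -> R) : R :=
  \big[Rmin/x 0%N]_(i < N) x (nat_of_ord i).
Definition pop_max (N : nat) (x : nat -> R) : R :=
  \big[Rmax/x 0%N]_(i < N) x (nat_of_ord i).

(* rho_n ; "n <= N/2" is equivalent to 2n <= N *)
Definition rho (N n : nat) : R :=
  if (n.*2 <= N)%N then (1 - (INR n - 1) / INR N)%R
  else ((1 - INR n / INR N) * (1 + 1 / INR n))%R.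

Definition perm_prob (N : nat) (E : 'S_N -> bool) : R :=
  Rdiv (INR #|[set s : 'S_N | E s]|) (INR #|[set: 'S_N]|).

(* sum_{t=1}^n (X_t - mu) with X_t = x_{pi(t)}; 0-based: t = 0..n-1 *)
Definition centered_sum (N n : nat) (x : nat -> R) (s : 'S_N) : R :=
  \big[Rplus/0%R]_(t < N | (nat_of_ord t < n)%N)
     (x (nat_of_ord (s t)) - pop_mean N x)%R.

From HB Require Import structures.
From mathcomp Require Import all_boot all_fingroup.
From Stdlib Require Import Reals Lra.
From Coquelicot Require Coquelicot.

(* 1. Hoeffding's lemma, first for a centred Bernoulli variable (a calculus
      argument on h^2/8 - log E[e^(h(B - p))]) and then, via the convexity
      chord of exp, for the uniform distribution on a finite list of values
      in [a, b].
   2. Serfling's moment bound: summed over all orderings t of a duplicate-free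
      list l of size m, the exponential moment of the deviation of the first
      j entries of t is at most m! exp (lam^2 (b-a)^2/8 j (1 - (j-1)/m)).
      The induction on j conditions on the first draw: the remaining draws
      are centred at the mean of the remaining population, and the first
      draw enters through Hoeffding's lemma.  Reading the orderings backwards
      gives the same bound with j replaced by m - j.
   3. Uniform permutations of 'I_N are identified with the orderings of
      0, ..., N-1, and the two bounds of step 2 give n rho_n as variance
      proxy.  Chernoff's bound at the optimal exponent yields the theorem;
      a constant population or n = N gives a vanishing centred sum. *)

Set Implicit Arguments.
Unset Strict Implicit.
Unset Printing Implicit Defensive.
Local Open Scope R_scope.

Lemma exp_mono x y : x <= y -> exp x <= exp y.
Proof. by case=> [/exp_increasing /Rlt_le | ->] //; apply: Rle_refl. Qed.

Module Hoeffding.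
Import Coquelicot.Coquelicot.

Lemma mvt_at_0 (f f' : R -> R) (h : R) :
  (forall y, is_derive f y (f' y)) ->
  exists c, (0 <= h -> 0 <= c) /\ (h <= 0 -> c <= 0) /\ f h - f 0 = f' c * h.
Proof.
move=> df.
have dfR : forall a b c, a <= c <= b -> derivable_pt_lim f c (f' c).
  by move=> a b c _; apply is_derive_Reals; exact: df.
have [h_neg | [-> | h_pos]] := Rtotal_order h 0.
- have [c [E Hc]] := MVT_cor2 f f' h 0 h_neg (dfR h 0).
  exists c; split; [lra | split; [lra | nra]].
- by exists 0; split; [lra | split; [lra | ring]].
- have [c [E Hc]] := MVT_cor2 f f' 0 h h_pos (dfR 0 h).
  exists c; split; [lra | split; [lra | nra]].
Qed.

Lemma sign_of_monotone (f f' : R -> R) (h : R) :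
  (forall y, is_derive f y (f' y)) -> (forall y, 0 <= f' y) -> f 0 = 0 ->
  (0 <= h -> 0 <= f h) /\ (h <= 0 -> f h <= 0).
Proof.
move=> df f'_ge0 f0; have [c [_ [_ E]]] := mvt_at_0 h df.
have := f'_ge0 c; split=> ?; nra.
Qed.

Lemma nonneg_of_derivative_sign (f f' : R -> R) (h : R) :
  (forall y, is_derive f y (f' y)) -> f 0 = 0 ->
  (forall c, (0 <= c -> 0 <= f' c) /\ (c <= 0 -> f' c <= 0)) -> 0 <= f h.
Proof.
move=> df f0 f'_sign; have [c [Hpos [Hneg E]]] := mvt_at_0 h df.
have [Hp Hn] := f'_sign c.
have [h_ge0 | /Rlt_le h_le0] := Rle_or_lt 0 h.
  by have := Hp (Hpos h_ge0); nra.
by have := Hn (Hneg h_le0); nra.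
Qed.

Section Bernoulli.
Variable p : R.
Hypothesis p01 : 0 <= p <= 1.

Let mgf h := 1 - p + p * exp h.

Lemma mgf_pos h : 0 < mgf h.
Proof. have := exp_pos h; rewrite /mgf; nra. Qed.

(* D h = h^2/8 - log E[exp (h (B - p))]; Hoeffding's lemma is D >= 0.  Its
   derivative D1 vanishes at 0 and has derivative 1/4 - Var >= 0. *)
Let D h := h ^ 2 / 8 + h * p - ln (mgf h).
Let D1 h := h / 4 + p - p * exp h / mgf h.
Let D2 h := / 4 - p * (1 - p) * exp h / mgf h ^ 2.

Lemma D_derive h : is_derive D h (D1 h).
Proof.
have := mgf_pos h; rewrite /D /D1 /mgf => Hm.
auto_derive; [lra | field; lra].
Qed.

Lemma D1_derive h : is_derive D1 h (D2 h).
Proof.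
have := mgf_pos h; rewrite /D1 /D2 /mgf => Hm.
auto_derive; [lra | field; lra].
Qed.

(* The variance p(1-p) e^h / mgf(h)^2 of the tilted Bernoulli is at most 1/4. *)
Lemma D2_nonneg h : 0 <= D2 h.
Proof.
have Hm := mgf_pos h; have He := exp_pos h.
have Hsq := pow2_ge_0 (1 - p - p * exp h).
have Hv : p * (1 - p) * exp h <= / 4 * mgf h ^ 2 by rewrite /mgf; nra.
have Hq : p * (1 - p) * exp h / mgf h ^ 2 <= / 4.
  apply: (Rmult_le_reg_r (mgf h ^ 2)); first exact: pow_lt.
  by rewrite /Rdiv Rmult_assoc Rinv_l; [lra | apply: pow_nonzero; lra].
rewrite /D2; lra.
Qed.

Lemma hoeffding_bernoulli h :
  (1 - p) * exp (- (h * p)) + p * exp (h * (1 - p)) <= exp (h ^ 2 / 8).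
Proof.
have D0 : D 0 = 0.
  by rewrite /D /mgf exp_0 Rmult_1_r (_ : 1 - p + p = 1) ?ln_1; lra.
have D1_0 : D1 0 = 0.
  by rewrite /D1 /mgf exp_0; field_simplify; lra.
have D1_sign c := sign_of_monotone c D1_derive D2_nonneg D1_0.
have D_ge0 := nonneg_of_derivative_sign h D_derive D0 D1_sign.
have Hm := mgf_pos h.
have -> : (1 - p) * exp (- (h * p)) + p * exp (h * (1 - p)) = exp (- (h * p) + ln (mgf h)).
  rewrite exp_plus exp_ln // /mgf (_ : h * (1 - p) = - (h * p) + h) ?exp_plus; ring.
by apply: exp_mono; rewrite /D in D_ge0; lra.
Qed.
End Bernoulli.
End Hoeffding.

HB.instance Definition _ := Monoid.isComLaw.Build R 0 Rplus
  (fun a b c => esym (Rplus_assoc a b c)) Rplus_comm Rplus_0_l.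
HB.instance Definition _ := Monoid.isMulLaw.Build R 0 Rmult Rmult_0_l Rmult_0_r.
HB.instance Definition _ :=
  Monoid.isAddLaw.Build R Rmult Rplus Rmult_plus_distr_r Rmult_plus_distr_l.

Lemma sumR_const (I : Type) (r : seq I) (c : R) :
  \big[Rplus/0]_(i <- r) c = INR (size r) * c.
Proof.
elim: r => [|y r IH]; first by rewrite big_nil /=; ring.
by rewrite big_cons IH (S_INR (size r)); ring.
Qed.

Lemma sumR_le_in (I : eqType) (r : seq I) (F G : I -> R) :
  (forall i, i \in r -> F i <= G i) ->
  \big[Rplus/0]_(i <- r) F i <= \big[Rplus/0]_(i <- r) G i.
Proof.
move=> FG; rewrite big_seq_cond [X in _ <= X]big_seq_cond.
elim/big_ind2: _ => [|*|i /andP[ir _]]; [exact: Rle_refl | exact: Rplus_le_compat | exact: FG].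
Qed.

Lemma sumR_sub_const (I : Type) (r : seq I) (F : I -> R) (c : R) :
  \big[Rplus/0]_(i <- r) (F i - c) = \big[Rplus/0]_(i <- r) F i - INR (size r) * c.
Proof. by rewrite big_split /= sumR_const; ring. Qed.

Lemma sumR_affine (I : Type) (r : seq I) (A B : R) (F : I -> R) :
  \big[Rplus/0]_(i <- r) (A + B * F i) = INR (size r) * A + B * \big[Rplus/0]_(i <- r) F i.
Proof. by rewrite big_split /= sumR_const big_distrr. Qed.

(* Convexity of exp, from its tangent lines. *)
Lemma exp_convex t u w : 0 <= t <= 1 ->
  exp (t * u + (1 - t) * w) <= t * exp u + (1 - t) * exp w.
Proof.
move=> t01; set c := t * u + (1 - t) * w.
have tangent v : exp c * (1 + (v - c)) <= exp v.
  rewrite -[in X in _ <= X](Rplus_minus c v) exp_plus.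
  by apply: Rmult_le_compat_l; [exact/Rlt_le/exp_pos | exact: exp_ineq1_le].
have Hu := Rmult_le_compat_l t _ _ (proj1 t01) (tangent u).
have Hw := Rmult_le_compat_l (1 - t) _ _ (ltac:(lra)) (tangent w).
have Ec : t * (exp c * (1 + (u - c))) + (1 - t) * (exp c * (1 + (w - c))) = exp c.
  by rewrite /c; ring.
lra.
Qed.

Lemma unit_ratio (a b v : R) : a < b -> a <= v <= b -> 0 <= (v - a) / (b - a) <= 1.
Proof.
move=> ab av; split; first by apply: Rmult_le_pos; [lra | apply/Rlt_le/Rinv_0_lt_compat; lra].
apply: (Rmult_le_reg_r (b - a)); first lra.
by rewrite /Rdiv Rmult_assoc Rinv_l; lra.
Qed.

Lemma exp_chord (a b s v : R) : a < b -> a <= v <= b ->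
  exp (s * v) <= ((b - v) * exp (s * a) + (v - a) * exp (s * b)) / (b - a).
Proof.
move=> ab av; have := unit_ratio ab av; set p := (v - a) / (b - a) => p01.
have -> : s * v = (1 - p) * (s * a) + (1 - (1 - p)) * (s * b) by rewrite /p; field; lra.
apply: Rle_trans (exp_convex _ _ (ltac:(lra) : 0 <= 1 - p <= 1)) _.
by right; rewrite /p; field; lra.
Qed.

(* Serfling's variance factor j (1 - (j - 1) / m) for the sum of the first j
   draws without replacement from a population of size m. *)
Definition serfling_var (m j : nat) : R := INR j * (INR m - INR j + 1) / INR m.

(* Adding one draw in front of j draws from the m remaining items: the
   conditional-mean term (1 - j/m)^2 and the old factor add up to at most
   the new factor. *)
Lemma serfling_var_step (m j : nat) : (j < m)%nat ->
  serfling_var m j + (1 - INR j / INR m) ^ 2 <= serfling_var m.+1 j.+1.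
Proof.
move=> /ltP jm; rewrite /serfling_var !S_INR.
have J_ge0 := pos_INR j; have JM := lt_INR _ _ jm; have M_gt0 : 0 < INR m by lra.
have -> : (INR j + 1) * (INR m + 1 - (INR j + 1) + 1) / (INR m + 1) =
          INR j * (INR m - INR j + 1) / INR m + (1 - INR j / INR m) ^ 2 +
          INR j * (INR m - INR j) / ((INR m + 1) * INR m ^ 2) by field; lra.
have : 0 <= INR j * (INR m - INR j) / ((INR m + 1) * INR m ^ 2).
  apply: Rmult_le_pos; first nra.
  by apply/Rlt_le/Rinv_0_lt_compat/Rmult_lt_0_compat; [lra | apply: pow_lt].
lra.
Qed.

Section EmpiricalHoeffding.
Variables (T : eqType) (x : T -> R).

Definition avg (l : seq T) : R := \big[Rplus/0]_(y <- l) x y / INR (size l).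

Lemma hoeffding_list (l : seq T) (a b s : R) :
  (0 < size l)%nat -> (forall y, y \in l -> a <= x y <= b) ->
  \big[Rplus/0]_(y <- l) exp (s * (x y - avg l)) <= INR (size l) * exp (s ^ 2 * (b - a) ^ 2 / 8).
Proof.
move=> l_gt0 xab; set m := INR (size l); set mu := avg l.
have m_gt0 : 0 < m by apply/lt_0_INR/ltP.
have sum_x : \big[Rplus/0]_(y <- l) x y = m * mu by rewrite /mu /avg -/m; field; lra.
have [a_mu mu_b] : a <= mu <= b.
  have lo : m * a <= m * mu.
    by rewrite -sum_x -sumR_const; apply: sumR_le_in => y /xab; lra.
  have hi : m * mu <= m * b.
    by rewrite -sum_x -sumR_const; apply: sumR_le_in => y /xab; lra.
  by split; apply: (Rmult_le_reg_l m).
have [ab | ab] := Rle_lt_or_eq_dec a b (Rle_trans _ _ _ a_mu mu_b); last first.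
  rewrite -sumR_const; apply: sumR_le_in => y /xab xy; apply: exp_mono.
  by rewrite -ab Rminus_diag (_ : x y - mu = 0); [nra | lra].
set e1 := exp (s * (a - mu)); set e2 := exp (s * (b - mu)).
set p := (mu - a) / (b - a); set h := s * (b - a).
apply: Rle_trans (_ : \big[Rplus/0]_(y <- l)
    ((b * e1 - a * e2) / (b - a) + (e2 - e1) / (b - a) * x y) <= _).
  apply: sumR_le_in => y /xab xy.
  apply: Rle_trans (@exp_chord (a - mu) (b - mu) s (x y - mu) ltac:(lra) ltac:(lra)) _.
  by right; rewrite /e1 /e2; field; lra.
have p01 : 0 <= p <= 1 := unit_ratio ab (conj a_mu mu_b).
have := Hoeffding.hoeffding_bernoulli p01 h.
rewrite (_ : exp (- (h * p)) = e1); last by rewrite /e1 /h /p; f_equal; field; lra.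
rewrite (_ : exp (h * (1 - p)) = e2); last by rewrite /e2 /h /p; f_equal; field; lra.
rewrite (_ : h ^ 2 / 8 = s ^ 2 * (b - a) ^ 2 / 8); last by rewrite /h Rpow_mult_distr.
rewrite sumR_affine -/m sum_x => bern.
have -> : m * ((b * e1 - a * e2) / (b - a)) + (e2 - e1) / (b - a) * (m * mu) =
          m * ((1 - p) * e1 + p * e2) by rewrite /p; field; lra.
by apply: Rmult_le_compat_l; lra.
Qed.

Definition partial_dev (l t : seq T) (j : nat) : R :=
  \big[Rplus/0]_(y <- take j t) (x y - avg l).

(* Drawing the first element y reveals information about the remaining mean:
   the deviation of the first j+1 entries of y :: t splits into a multiple
   of x y - avg l and the deviation of t with respect to the mean of the
   remaining population rem y l. *)
Lemma partial_dev_cons (l t : seq T) (y : T) (j : nat) :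
  y \in l -> (j <= size t)%nat -> (0 < size (rem y l))%nat ->
  partial_dev l (y :: t) j.+1 =
  (1 - INR j / INR (size (rem y l))) * (x y - avg l) + partial_dev (rem y l) t j.
Proof.
move=> yl jt rem_gt0; rewrite /partial_dev /= big_cons !sumR_sub_const size_take_min.
have sum_l : \big[Rplus/0]_(z <- l) x z = x y + \big[Rplus/0]_(z <- rem y l) x z.
  by rewrite (perm_big _ (perm_to_rem yl)) big_cons.
rewrite (minn_idPl jt) /avg sum_l.
have size_l : size l = (size (rem y l)).+1 by rewrite size_rem // prednK //; case: (l) yl.
have /lt_0_INR M_gt0 := ltP rem_gt0.
rewrite size_l S_INR; field; lra.
Qed.

Lemma sum_permutations_cons (F : seq T -> R) (l : seq T) : uniq l -> (0 < size l)%nat ->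
  \big[Rplus/0]_(t <- permutations l) F t =
  \big[Rplus/0]_(y <- l) \big[Rplus/0]_(t <- permutations (rem y l)) F (y :: t).
Proof.
move=> l_uniq l_gt0.
by rewrite (perm_big _ (permutationsE l_gt0)) big_allpairs_dep undup_id.
Qed.

(* Serfling's bound on the moment generating function of the sum of the
   first j draws without replacement from l, written as a sum over all
   orderings of l: induction on j, conditioning on the first draw and
   applying Hoeffding's lemma to it. *)
Lemma serfling_mgf (a b lam : R) (j : nat) (l : seq T) :
  uniq l -> (j < size l)%nat -> (forall y, y \in l -> a <= x y <= b) ->
  \big[Rplus/0]_(t <- permutations l) exp (lam * partial_dev l t j) <=
  INR (size l)`! * exp (lam ^ 2 * ((b - a) ^ 2 / 8) * serfling_var (size l) j).
Proof.
set c := (b - a) ^ 2 / 8.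
elim: j l => [|j IH] l l_uniq j_lt xab.
  rewrite (eq_bigr (fun=> 1)) => [|t _]; last by rewrite /partial_dev take0 big_nil Rmult_0_r exp_0.
  rewrite sumR_const size_permutations // /serfling_var Rmult_0_l /Rdiv !Rmult_0_l Rmult_0_r exp_0.
  by right; ring.
case size_l: (size l) j_lt => [//|m]; rewrite ltnS => jm.
set mu := lam * (1 - INR j / INR m).
set K := INR m`! * exp (lam ^ 2 * c * serfling_var m j).
have rem_size y : y \in l -> size (rem y l) = m by move=> yl; rewrite size_rem // size_l.
have cond_step y : y \in l ->
    \big[Rplus/0]_(t <- permutations (rem y l)) exp (lam * partial_dev l (y :: t) j.+1) <=
    exp (mu * (x y - avg l)) * K.
  move=> yl; rewrite (eq_big_seq (fun t => exp (mu * (x y - avg l)) *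
                                    exp (lam * partial_dev (rem y l) t j))).
    rewrite -big_distrr; apply: Rmult_le_compat_l; first exact/Rlt_le/exp_pos.
    have := IH (rem y l) (rem_uniq y l_uniq); rewrite rem_size // => /(_ jm); apply.
    by move=> z /mem_rem; apply: xab.
  move=> t; rewrite mem_permutations => /perm_size t_size.
  have m_gt0 : (0 < m)%nat := leq_ltn_trans (leq0n j) jm.
  rewrite partial_dev_cons ?t_size ?rem_size ?(ltnW jm) //.
  by rewrite -exp_plus /mu; f_equal; ring.
rewrite sum_permutations_cons ?size_l //.
apply: Rle_trans (sumR_le_in cond_step) _.
rewrite (eq_bigr (fun y => K * exp (mu * (x y - avg l)))) => [|y _]; last exact: Rmult_comm.
rewrite -big_distrr /K factS mult_INR; set v := lam ^ 2 * c.
have v_ge0 : 0 <= v.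
  by apply: Rmult_le_pos; [apply: pow2_ge_0 | rewrite /c; have := pow2_ge_0 (b - a); lra].
have first_draw : \big[Rplus/0]_(y <- l) exp (mu * (x y - avg l)) <=
                  INR m.+1 * exp (v * (1 - INR j / INR m) ^ 2).
  have l_gt0 : (0 < size l)%nat by rewrite size_l.
  have := hoeffding_list mu l_gt0 xab; rewrite size_l.
  by rewrite (_ : mu ^ 2 * (b - a) ^ 2 / 8 = v * (1 - INR j / INR m) ^ 2) // /mu /v /c /Rdiv; ring.
have := exp_mono (Rmult_le_compat_l _ _ _ v_ge0 (serfling_var_step jm)).
rewrite Rmult_plus_distr_l exp_plus => factor_step.
have fact_ge0 := pos_INR m`!; have size_ge0 := pos_INR m.+1.
apply: Rle_trans (Rmult_le_compat_l _ _ _ _ first_draw) _.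
  by apply: Rmult_le_pos; [| apply/Rlt_le/exp_pos].
rewrite (_ : forall f g e e' : R, f * e * (g * e') = g * f * (e * e')); last by move=> *; ring.
by apply: Rmult_le_compat_l => //; apply: Rmult_le_pos.
Qed.

Lemma total_dev_zero (l t : seq T) : perm_eq t l -> (0 < size l)%nat ->
  \big[Rplus/0]_(y <- t) (x y - avg l) = 0.
Proof.
move=> tl l_gt0; have /lt_0_INR m_gt0 := ltP l_gt0.
have sum_t : \big[Rplus/0]_(y <- t) x y = \big[Rplus/0]_(y <- l) x y := perm_big _ tl.
by rewrite sumR_sub_const (perm_size tl) sum_t /avg; field; lra.
Qed.

Lemma partial_dev_rev (l t : seq T) (j : nat) :
  perm_eq t l -> (0 < size l)%nat -> (j <= size l)%nat ->
  partial_dev l t j = - partial_dev l (rev t) (size l - j).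
Proof.
move=> tl l_gt0 jl; have t_size := perm_size tl.
have := total_dev_zero tl l_gt0; rewrite -{1}(cat_take_drop j t) big_cat /=.
have rev_sum : \big[Rplus/0]_(y <- rev (drop j t)) (x y - avg l) =
               \big[Rplus/0]_(y <- drop j t) (x y - avg l) by rewrite big_rev.
by rewrite /partial_dev take_rev t_size subKn // rev_sum; lra.
Qed.

Lemma serfling_mgf_rev (a b lam : R) (j : nat) (l : seq T) :
  uniq l -> (0 < j)%nat -> (j <= size l)%nat -> (forall y, y \in l -> a <= x y <= b) ->
  \big[Rplus/0]_(t <- permutations l) exp (lam * partial_dev l t j) <=
  INR (size l)`! * exp (lam ^ 2 * ((b - a) ^ 2 / 8) * serfling_var (size l) (size l - j)).
Proof.
move=> l_uniq j_gt0 jl xab; have l_gt0 := leq_trans j_gt0 jl.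
have perms_rev : perm_eq (permutations l) (map rev (permutations l)).
  apply: uniq_perm; first exact: permutations_uniq.
    by rewrite (map_inj_uniq (can_inj revK)) permutations_uniq.
  by move=> t; rewrite -[t in RHS]revK (mem_map (can_inj revK)) !mem_permutations perm_rev.
rewrite (perm_big _ perms_rev) big_map.
rewrite (eq_big_seq (fun t => exp (- lam * partial_dev l t (size l - j)))) => [|t].
  have := serfling_mgf (- lam) (j := size l - j) l_uniq _ xab.
  by rewrite -Rsqr_pow2 -Rsqr_neg Rsqr_pow2; apply; rewrite ltn_subrL j_gt0.
rewrite mem_permutations => tl; have rtl : perm_eq (rev t) l by rewrite perm_rev.
by rewrite (partial_dev_rev rtl) // revK; f_equal; ring.
Qed.

End EmpiricalHoeffding.

Lemma index_enumE (T : finType) : index_enum T = enum T.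
Proof. by rewrite [index_enum T]unlock -enumT. Qed.

Lemma bigmin_le (I : eqType) (r : seq I) (F : I -> R) (d : R) (i : I) :
  i \in r -> \big[Rmin/d]_(j <- r) F j <= F i.
Proof.
elim: r => [//|k r IH]; rewrite inE big_cons => /orP [/eqP -> | ir]; first exact: Rmin_l.
exact: Rle_trans (Rmin_r _ _) (IH ir).
Qed.

Lemma bigmax_ge (I : eqType) (r : seq I) (F : I -> R) (d : R) (i : I) :
  i \in r -> F i <= \big[Rmax/d]_(j <- r) F j.
Proof.
elim: r => [//|k r IH]; rewrite inE big_cons => /orP [/eqP -> | ir]; first exact: Rmax_l.
exact: Rle_trans (IH ir) (Rmax_r _ _).
Qed.

Section Population.
Variables (N : nat) (x : nat -> R).

Definition draw_order (s : 'S_N) : seq nat := [seq val (s i) | i <- enum 'I_N].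

Lemma draw_order_perm (s : 'S_N) : perm_eq (draw_order s) (iota 0 N).
Proof.
have -> : draw_order s = map val (map s (enum 'I_N)) by rewrite -map_comp.
rewrite -val_enum_ord; apply/perm_map/uniq_perm.
- by rewrite map_inj_uniq ?enum_uniq //; exact: perm_inj.
- exact: enum_uniq.
- by move=> i; rewrite mem_enum; apply/mapP; exists ((s^-1)%g i); rewrite ?mem_enum ?permKV.
Qed.

Lemma draw_order_inj : injective draw_order.
Proof.
move=> s1 s2 /eq_in_map eq12; apply/permP => i; apply: val_inj.
by apply: eq12; rewrite mem_enum.
Qed.

Lemma sum_over_Sn (F : seq nat -> R) :
  \big[Rplus/0]_(s : 'S_N) F (draw_order s) = \big[Rplus/0]_(t <- permutations (iota 0 N)) F t.
Proof.
have uniq_orders : uniq (map draw_order (index_enum {perm 'I_N})).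
  by rewrite map_inj_uniq ?index_enum_uniq //; exact: draw_order_inj.
rewrite -(big_map draw_order xpredT F); apply/perm_big/uniq_perm => //.
  exact: permutations_uniq.
apply: (uniq_min_size uniq_orders _ _).2.
- by move=> t /mapP [s _ ->]; rewrite mem_permutations draw_order_perm.
- rewrite size_map size_permutations ?iota_uniq // size_iota.
  by rewrite index_enumE -cardT card_Sn.
Qed.

Lemma pop_mean_avg : pop_mean N x = avg x (iota 0 N).
Proof. by rewrite /pop_mean /avg size_iota -(big_mkord xpredT) /index_iota subn0. Qed.

Lemma pop_bounds (y : nat) : y \in iota 0 N -> pop_min N x <= x y <= pop_max N x.
Proof.
rewrite mem_iota add0n => /andP [_ yN].
by split; [exact: (bigmin_le _ _ (mem_index_enum (Ordinal yN))) |
           exact: (bigmax_ge _ _ (mem_index_enum (Ordinal yN)))].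
Qed.

Lemma pop_min_le_max : (0 < N)%nat -> pop_min N x <= pop_max N x.
Proof. by move=> N_gt0; have := @pop_bounds 0; rewrite mem_iota N_gt0 => /(_ isT); lra. Qed.

Lemma centered_sum_partial_dev (n : nat) (s : 'S_N) : (n <= N)%nat ->
  centered_sum n x s = partial_dev x (iota 0 N) (draw_order s) n.
Proof.
move=> nN; rewrite /centered_sum /partial_dev -pop_mean_avg /draw_order -map_take big_map.
have first_n : [seq i : 'I_N <- enum 'I_N | (i < n)%nat] = take n (enum 'I_N).
  apply: (inj_map val_inj); rewrite map_take val_enum_ord take_iota (minn_idPl nN).
  by rewrite -(filter_iota_ltn 0 nN) -val_enum_ord filter_map.
by rewrite -first_n big_filter index_enumE.
Qed.

Lemma rho_serfling_var (n : nat) : (0 < n)%nat -> (n <= N)%nat ->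
  INR n * rho N n = serfling_var N (if (n.*2 <= N)%nat then n else (N - n)%nat).
Proof.
move=> n_gt0 nN; have /lt_0_INR n_pos := ltP n_gt0.
have N_pos : 0 < INR N by apply/lt_0_INR/ltP/(leq_trans n_gt0).
rewrite /rho /serfling_var; case: ifP => _; first by field; lra.
by rewrite minus_INR; [field; lra | apply/leP].
Qed.

Lemma centered_mgf (n : nat) (lam : R) : (0 < n)%nat -> (n <= N)%nat ->
  \big[Rplus/0]_(s : 'S_N) exp (lam * centered_sum n x s) <=
  INR N`! * exp (lam ^ 2 * ((pop_max N x - pop_min N x) ^ 2 / 8) * (INR n * rho N n)).
Proof.
move=> n_gt0 nN; rewrite rho_serfling_var //.
set F := fun t => exp (lam * partial_dev x (iota 0 N) t n).
rewrite (eq_bigr (fun s => F (draw_order s))) => [|s _]; last first.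
  by rewrite /F centered_sum_partial_dev.
rewrite sum_over_Sn.
have := @serfling_mgf_rev _ x _ _ lam n _ (iota_uniq 0 N) n_gt0.
have := @serfling_mgf _ x _ _ lam n _ (iota_uniq 0 N).
rewrite size_iota => mgf_front mgf_back.
case: ifP => small_n; last exact: mgf_back nN pop_bounds.
apply: mgf_front pop_bounds.
by apply: leq_trans small_n; rewrite -addnn -addn1 leq_add2l.
Qed.

Lemma centered_sum_degenerate (n : nat) (s : 'S_N) : (0 < N)%nat -> (n <= N)%nat ->
  (n = N \/ pop_max N x = pop_min N x) -> centered_sum n x s = 0.
Proof.
move=> N_gt0 nN degenerate; rewrite centered_sum_partial_dev // /partial_dev.
have order_perm := draw_order_perm s.
case: degenerate => [-> | flat].
  rewrite take_oversize ?(perm_size order_perm) ?size_iota //.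
  by apply: total_dev_zero; rewrite ?size_iota.
have x_flat y : y \in iota 0 N -> x y = pop_min N x by move/pop_bounds; lra.
have mean_flat : avg x (iota 0 N) = pop_min N x.
  have /lt_0_INR N_pos := ltP N_gt0.
  by rewrite /avg (eq_big_seq _ x_flat) sumR_const size_iota; field; lra.
rewrite (eq_big_seq (fun=> 0)) ?sumR_const ?Rmult_0_r // => y /mem_take.
by rewrite (perm_mem order_perm) => /x_flat ->; rewrite mean_flat Rminus_diag.
Qed.

Lemma degenerate_tail_empty (n : nat) (beta : R) : (0 < N)%nat -> (n <= N)%nat ->
  (n = N \/ pop_max N x = pop_min N x) -> 0 <= beta ->
  ~: [set s : 'S_N | Rle_dec (centered_sum n x s / INR n) beta] = set0.
Proof.
move=> N_gt0 nN degenerate beta_ge0; apply/setP => s; rewrite !inE.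
by rewrite centered_sum_degenerate // /Rdiv Rmult_0_l; case: Rle_dec.
Qed.

End Population.

Lemma perm_prob_ge (N : nat) (E : 'S_N -> bool) (delta : R) :
  INR #|~: [set s | E s]| <= delta * INR N`! -> perm_prob E >= 1 - delta.
Proof.
rewrite /perm_prob cardsT card_Sn; set S := [set s | E s] => small_compl.
have /lt_0_INR fact_pos := ltP (fact_gt0 N).
have split_card : INR #|S| + INR #|~: S| = INR N`!.
  by rewrite -plus_INR; congr INR; exact: etrans (cardsC _) (card_Sn N).
apply: Rle_ge; apply: (Rmult_le_reg_r (INR N`!)) => //.
rewrite /Rdiv Rmult_assoc (Rinv_l _ (Rgt_not_eq _ _ fact_pos)) Rmult_1_r.
lra.
Qed.

Lemma card_sumR (T : finType) (A : {set T}) : INR #|A| = \big[Rplus/0]_(s in A) 1.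
Proof. by rewrite big_const; elim: #|A| => [//|k IH]; rewrite iterS -IH S_INR Rplus_comm. Qed.

Lemma chernoff_count (T : finType) (Z : T -> R) (c beta lam : R) : 0 < c -> 0 <= lam ->
  INR #|~: [set s | Rle_dec (Z s / c) beta]| <=
  exp (- (lam * (c * beta))) * \big[Rplus/0]_(s : T) exp (lam * Z s).
Proof.
move=> c_pos lam_ge0; rewrite card_sumR big_distrr big_mkcond /=.
apply: sumR_le_in => s _; rewrite in_setC in_set -exp_plus.
case: (Rle_dec (Z s / c) beta) => [_ | /Rnot_le_lt large] /=; first exact/Rlt_le/exp_pos.
rewrite -exp_0; apply: exp_mono.
have : c * beta < Z s.
  by rewrite [Z s](_ : _ = c * (Z s / c)); [apply: Rmult_lt_compat_l | field; lra].
nra.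
Qed.

Lemma rho_pos (N n : nat) : (0 < n)%nat -> (n < N)%nat -> 0 < rho N n.
Proof.
move=> n_gt0 nN; have /lt_0_INR n_pos := ltP n_gt0.
have /lt_INR n_lt_N := ltP nN.
rewrite /rho; case: ifP => _.
  have -> : 1 - (INR n - 1) / INR N = (INR N - INR n + 1) / INR N by field; lra.
  by apply: Rdiv_lt_0_compat; lra.
have -> : (1 - INR n / INR N) * (1 + 1 / INR n) = (INR N - INR n) * (INR n + 1) / (INR N * INR n).
  by field; lra.
by apply: Rdiv_lt_0_compat; nra.
Qed.

(* The exponent of Chernoff's bound with a Gaussian moment bound
   e^(lam^2 v), at its minimiser lam = t / (2 v). *)
Lemma gaussian_chernoff_exponent (t v : R) : 0 < v ->
  - (t / (2 * v) * t) + (t / (2 * v)) ^ 2 * v = - (t ^ 2 / (4 * v)).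
Proof. by move=> v_pos; field; lra. Qed.

Lemma tail_count (N : nat) (x : nat -> R) (n : nat) (delta : R) :
  (0 < n)%nat -> (n < N)%nat -> pop_min N x < pop_max N x -> 0 < delta <= 1 ->
  INR #|~: [set s : 'S_N | Rle_dec (centered_sum n x s / INR n)
             ((pop_max N x - pop_min N x) * sqrt (rho N n * ln (1 / delta) / (2 * INR n)))]|
  <= delta * INR N`!.
Proof.
set a := pop_min N x; set b := pop_max N x => n_gt0 nN ab delta01.
have /lt_0_INR n_pos := ltP n_gt0; have rho_gt0 := rho_pos n_gt0 nN.
set L := ln (1 / delta); set beta := (b - a) * sqrt (rho N n * L / (2 * INR n)).
set v := (b - a) ^ 2 / 8 * (INR n * rho N n); set t := INR n * beta.
have exp_L : exp (- L) = delta.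
  by rewrite /L /Rdiv Rmult_1_l ln_Rinv ?Ropp_involutive ?exp_ln; lra.
have L_ge0 : 0 <= L.
  by apply: Rnot_lt_le => /Ropp_0_gt_lt_contravar /exp_increasing; rewrite exp_0 exp_L; lra.
have v_pos : 0 < v.
  by apply: Rmult_lt_0_compat; [have := pow_lt _ 2 (ltac:(lra) : 0 < b - a); lra | nra].
have t_ge0 : 0 <= t.
  by apply: Rmult_le_pos; [lra | apply: Rmult_le_pos; [lra | apply: sqrt_pos]].
have t_sq : t ^ 2 = 4 * v * L.
  have rad_ge0 : 0 <= rho N n * L / (2 * INR n).
    by apply: Rmult_le_pos; [nra | apply/Rlt_le/Rinv_0_lt_compat; lra].
  rewrite /t /beta (_ : forall u w z : R, (u * (w * z)) ^ 2 = u ^ 2 * w ^ 2 * (z * z)).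
    by rewrite sqrt_sqrt // /v; field; lra.
  by move=> *; ring.
set lam := t / (2 * v).
have lam_ge0 : 0 <= lam by apply: Rmult_le_pos; [| apply/Rlt_le/Rinv_0_lt_compat]; lra.
have exponent : - (lam * t) + lam ^ 2 * v = - L.
  by rewrite gaussian_chernoff_exponent // t_sq; field; lra.
apply: Rle_trans (chernoff_count _ _ n_pos lam_ge0) _.
have mgf := centered_mgf x lam n_gt0 (ltnW nN).
apply: Rle_trans (Rmult_le_compat_l _ _ _ (Rlt_le _ _ (exp_pos _)) mgf) _.
rewrite -/a -/b Rmult_assoc -/v -/t (Rmult_comm (INR N`!)) -Rmult_assoc -exp_plus.
by rewrite exponent exp_L; apply: Rle_refl.
Qed.

Close Scope R_scope.

Theorem corollary1 (N : nat) (x : nat -> R) (n : nat) (delta : R) :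
  (2 <= N)%N -> (1 <= n)%N -> (n <= N)%N -> (0 < delta <= 1)%R ->
  (perm_prob (fun s : 'S_N =>
     Rle_dec (centered_sum n x s / INR n)
       ((pop_max N x - pop_min N x) *
        sqrt (rho N n * ln (1 / delta) / (2 * INR n)))) >= 1 - delta)%R.
Proof.
move=> N_ge2 n_gt0 nN delta01; apply: perm_prob_ge.
have N_gt0 : (0 < N)%N := leq_trans (isT : (0 < 2)%N) N_ge2.
have a_le_b := pop_min_le_max x N_gt0.
have [[nN' ab] | degenerate] :
    ((n < N)%N /\ (pop_min N x < pop_max N x)%R) \/ (n = N \/ pop_max N x = pop_min N x).
  case: (Rle_lt_or_eq_dec _ _ a_le_b) => [ab | flat]; last by right; right.
  by case: (ltnP n N) => [nN' | Nn]; [left | right; left; apply/eqP; rewrite eqn_leq nN].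
- exact: tail_count.
- rewrite degenerate_tail_empty // ?cards0 /=; first by have := pos_INR N`!; nra.
  by apply: Rmult_le_pos; [lra | apply: sqrt_pos].
Qed.
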